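(* For $n\in\mathbb N$, $$\Phi^*_n(-1)=\begin{cases}-2 & n=1,\\ 0 & n=2^a,\ a\ge1,\\ p^b & n=2^ap^b \text{ with } p \text{ an odd prime},\ a,b\ge1,\\ 1 & \text{otherwise}.\end{cases}$$
   Context: $d\mid\mid n$ means $d\mid n$ and $\gcd(d,n/d)=1$; $(j,n)_*=\max\{d: d\mid j,\ d\mid\mid n\}$; $\Phi^*_n(x)=\prod_{1\le j\le n,\ (j,n)_*=1}(x-e^{2\pi i j/n})$. *)

From HB Require Import structures.
From mathcomp Require Import all_boot all_order all_algebra all_field.
Set Implicit Arguments. Unset Strict Implicit. Unset Printing Implicit Defensive.
Import Order.TTheory GRing.Theory Num.Theory.

Definition udvdn (d n : nat) : bool := (d %| n) && coprime d (n %/ d).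

(* (j,n)_* = max { d : d | j, d || n }  (for n > 0 every such d is <= n). *)
Definition ugcdn (j n : nat) : nat :=
  \max_(d < n.+1 | (d %| j) && udvdn d n) (nat_of_ord d).

(* zeta n = e^{2 pi i / n} in algC: n.-root (-1) is e^{i pi / n}
   (the n-th root of -1 of minimal nonnegative argument). *)
Definition zeta (n : nat) : algC := ((n.-root (-1)) ^+ 2)%R.

Local Open Scope ring_scope.

Definition uPhi (n : nat) : {poly algC} :=
  \prod_(1 <= j < n.+1 | ugcdn j n == 1%N) ('X - (zeta n ^+ j)%:P).

From HB Require Import structures.
From mathcomp Require Import all_boot all_order all_algebra all_field.
From mathcomp Require Import zify.
Import Order.TTheory GRing.Theory Num.Theory.
Set Implicit Arguments. Unset Strict Implicit. Unset Printing Implicit Defensive.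
Local Open Scope ring_scope.

(* For q = p^e with p prime and coprime to m, the unitary divisors of qm are the d and
   the q d with d || m, so (j, qm)_* = 1 iff (j, m)_* = 1 and q does not divide j.  For
   a primitive qm-th root zeta, x^q - zeta^(qk) = prod_(i < q) (x - zeta^(k + im)), so
   Phi*_m(x^q) is the product of the x - zeta^j over j < qm with (j, m)_* = 1; splitting
   off the j divisible by q gives Phi*_qm(x) Phi*_m(x) = Phi*_m(x^q).  At x = 1 and
   x = -1 this identity, with Phi*_1(x) = x - 1 and Phi*_(p^e)(1) = p^e, yields every
   value by induction on the number of prime factors.

   This needs zeta n = (n.-root (-1))^2 to be a primitive n-th root of unity, i.e.
   y = n.-root (-1) to have order 2n.  Among the n-th roots of -1, y has the largest
   real part.  If y^M = -1 for a proper divisor M = n/d, then Re y <= Re a for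
   a = M.-root (-1).  On the unit circle Re (v^M) = T_M (Re v) for the Chebyshev
   polynomial T_M, so the intermediate value theorem gives an M-th root v of
   w = d.-root (-1) with Re v >= Re a.  As v is an n-th root of -1, Re v <= Re y <= Re a,
   so v is a or its conjugate and w = v^M = -1, which is false for d > 1. *)

Lemma prim_root_half (R : idomainType) n (w : R) : (0 < n)%N ->
  (n.*2).-primitive_root w -> w ^+ n = -1.
Proof.
move=> n0 pw; have /eqP := prim_expr_order pw; rewrite -muln2 exprM sqrf_eq1.
case/orP=> /eqP // wn1; move: (prim_order_dvd pw n); rewrite wn1 eqxx.
by move/dvdn_leq => /(_ n0); lia.
Qed.

Lemma prim_root_double (R : numDomainType) N (y : R) : (0 < N)%N -> y ^+ N = -1 ->
    (forall M, (0 < M)%N -> (M %| N)%N -> (M < N)%N -> y ^+ M != -1) ->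
  (N.*2).-primitive_root y.
Proof.
move=> N0 yN y_proper.
have N1_neq1 : (-1 : R) != 1 by rewrite -subr_eq0 -opprD oppr_eq0 (pnatr_eq0 _ 2).
have [m pm m_dvd] : {m | m.-primitive_root y & (m %| N.*2)%N}.
  by apply: prim_order_exists; rewrite ?double_gt0 // -muln2 exprM yN sqrrN expr1n.
have m0 := prim_order_gt0 pm.
have m_ndvd : ~~ (m %| N)%N by rewrite (prim_order_dvd pm) yN.
have m_even : ~~ odd m.
  apply: contra m_ndvd => m_odd; rewrite -(@Gauss_dvdl _ _ 2) ?coprimen2 //.
  by rewrite muln2.
set M := m./2; have mM : m = M.*2 by rewrite -[LHS]odd_double_half (negPf m_even).
have M0 : (0 < M)%N by move: m0; rewrite mM double_gt0.
have MN : (M %| N)%N by rewrite -(dvdn_pmul2r (isT : 0 < 2)%N) !muln2 -mM.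
have yM : y ^+ M = -1 by apply: prim_root_half; rewrite -?mM.
have M_nlt : ~~ (M < N)%N by apply/negP => /(y_proper M M0 MN); rewrite yM eqxx.
suff -> : N = M by rewrite -mM.
by apply/eqP; rewrite eqn_leq leqNgt M_nlt dvdn_leq.
Qed.

Lemma prim_root_exp_mull (R : nzRingType) q m (z : R) :
  (q * m).-primitive_root z -> m.-primitive_root (z ^+ q).
Proof.
move=> pz; have m0 : (0 < m)%N by move: (prim_order_gt0 pz); rewrite muln_gt0 => /andP[].
by have := dvdn_prim_root pz (dvdn_mull q (dvdnn m)); rewrite mulnK.
Qed.

Section Chebyshev.
Variable R : nzRingType.

Fixpoint chebyshev (n : nat) : {poly R} :=
  match n with
  | 0 => 1
  | 1 => 'X
  | (m.+1 as k).+1 => 'X * chebyshev k *+ 2 - chebyshev m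
  end.

Lemma chebyshevSS n : chebyshev n.+2 = 'X * chebyshev n.+1 *+ 2 - chebyshev n.
Proof. by []. Qed.

End Chebyshev.

Lemma map_chebyshev (R S : nzRingType) (f : {rmorphism R -> S}) n :
  map_poly f (chebyshev R n) = chebyshev S n.
Proof.
suff: map_poly f (chebyshev R n) = chebyshev S n /\
      map_poly f (chebyshev R n.+1) = chebyshev S n.+1 by case.
elim: n => [|n [IHn IHn1]]; first by split; rewrite /= ?rmorph1 ?map_polyX.
by split=> //; rewrite !chebyshevSS rmorphB rmorphMn rmorphM /= map_polyX IHn IHn1.
Qed.

Section UnitCircle.
Variable C : numClosedFieldType.
Implicit Types v w : C.

Lemma Re1 : 'Re (1 : C) = 1.
Proof. exact/Creal_ReP/rpred1. Qed.

Lemma ReN1 : 'Re (-1 : C) = -1.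
Proof. by rewrite raddfN /= Re1. Qed.

Lemma Re_unit_bounds v : `|v| = 1 -> -1 <= 'Re v <= 1.
Proof.
by move=> v1; rewrite -real_ler_norml ?Creal_Re // -v1 (leif_normC_Re_Creal v).1.
Qed.

Lemma unit_Re_eq v w : `|v| = 1 -> `|w| = 1 -> 'Re v = 'Re w -> w = v \/ w = v^*.
Proof.
move=> v1 w1 eRe.
have /eqP : 'Im w ^+ 2 = 'Im v ^+ 2.
  by apply: (addrI ('Re v ^+ 2)); rewrite -normC2_Re_Im eRe -normC2_Re_Im v1 w1.
rewrite eqf_sqr => /orP[]/eqP eIm; [left | right].
  by rewrite [w]Crect [v]Crect eRe eIm.
by rewrite [w]Crect [v^*]Crect Re_conj Im_conj eRe eIm.
Qed.

Lemma chebyshev_Re v n : `|v| = 1 -> (chebyshev C n).[ 'Re v] = 'Re (v ^+ n).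
Proof.
move=> v1; suff: (chebyshev C n).[ 'Re v] = 'Re (v ^+ n) /\
                  (chebyshev C n.+1).[ 'Re v] = 'Re (v ^+ n.+1) by case.
elim: n => [|n [IHn IHn1]].
  by rewrite hornerC hornerX expr1 expr0 Re1.
split=> //; rewrite chebyshevSS hornerD hornerN hornerMn hornerM hornerX IHn IHn1.
have rec : v ^+ n.+2 + v ^+ n = v ^+ n.+1 * ('Re v *+ 2).
  rewrite ReE -mulr_natr divfK ?pnatr_eq0 // mulrDr -exprSr.
  by rewrite [v ^+ n.+1]exprSr -mulrA -normCK v1 expr1n mulr1.
apply: (addIr ('Re (v ^+ n))); rewrite -raddfD /= rec ReMr ?rpredMn ?Creal_Re //.
by rewrite subrK mulrnAr mulrC.
Qed.

Lemma unit_of_Re x : x \is Num.real -> -1 <= x <= 1 -> exists2 v : C, `|v| = 1 & 'Re v = x.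
Proof.
move=> xR /andP[x_ge x_le]; set s := 1 - x ^+ 2.
have s_ge0 : 0 <= s.
  rewrite /s -(expr1n _ 2) subr_sqr mulr_ge0 ?subr_ge0 //.
  by rewrite addrC -lerBlDr sub0r.
have sR : sqrtC s \is Num.real by rewrite sqrtC_real.
exists (x + 'i * sqrtC s); last by rewrite Re_rect.
apply/eqP; rewrite -(pexpr_eq1 (n := 2)) // normC2_Re_Im Re_rect // Im_rect //.
by rewrite sqrtCK /s addrC subrK.
Qed.

End UnitCircle.

Lemma exists_root_Re_ge (M : nat) (a w : algC) :
  `|a| = 1 -> `|w| = 1 -> 'Re (a ^+ M) <= 'Re w ->
  exists v, [/\ `|v| = 1, v ^+ M = w & 'Re a <= 'Re v].
Proof.
move=> a1 w1 aMw; have /andP[Re_a_ge Re_a_le] := Re_unit_bounds a1.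
have cheb (x : algR) v : `|v| = 1 -> algRval x = 'Re v ->
    algRval (chebyshev algR M).[x] = 'Re (v ^+ M).
  by move=> v1 xv; rewrite -horner_map map_chebyshev /= xv chebyshev_Re.
have le_algR (y z : algR) : algRval y <= algRval z -> y <= z by [].
set ra := in_algR (Creal_Re a); set rw := in_algR (Creal_Re w).
have [x /andP[ra_x x_le1]] : exists2 x, ra <= x <= 1 & root (chebyshev algR M - rw%:P) x.
  apply: poly_ivt; rewrite ?hornerE ?subr_le0 ?subr_ge0 //=.
  apply/andP; split; apply: le_algR; first by rewrite (cheb ra a).
  by rewrite (cheb 1 1) ?normr1 ?Re1 // expr1n Re1; case/andP: (Re_unit_bounds w1).
rewrite /root !hornerE subr_eq0 => /eqP x_cheb.
have [v0 v01 Re_v0] : exists2 v0 : algC, `|v0| = 1 & 'Re v0 = algRval x.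
  by apply: unit_of_Re; rewrite ?algRvalP // (le_trans Re_a_ge ra_x).
have v0M1 : `|v0 ^+ M| = 1 by rewrite normrX v01 expr1n.
have : 'Re (v0 ^+ M) = 'Re w by rewrite -(cheb x v0) // x_cheb.
case/(unit_Re_eq v0M1 w1) => ->; first by exists v0; rewrite Re_v0.
by exists v0^*; rewrite norm_conjC Re_conj Re_v0 rmorphXn.
Qed.

Lemma norm_rootN1 n : (0 < n)%N -> `|n.-root (-1 : algC)| = 1.
Proof. by move=> n0; rewrite norm_rootC normrN1 rootC1. Qed.

Lemma Re_le_Re_rootN1 n (v : algC) : (0 < n)%N -> v ^+ n = -1 ->
  'Re v <= 'Re (n.-root (-1)).
Proof.
move=> n0 vn; have [Im_ge0 | Im_lt0] := boolP (0 <= 'Im v); first exact: rootC_Re_max.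
rewrite -Re_conj; apply: rootC_Re_max => //; first by rewrite -rmorphXn vn rmorphN1.
by rewrite Im_conj oppr_ge0 ltW // real_ltNge ?Creal_Im.
Qed.

Lemma rootN1_neqN1 d : (1 < d)%N -> d.-root (-1 : algC) != -1.
Proof.
move=> d_gt1; have d0 : (0 < d)%N by apply: ltnW.
have [w pw] := @C_prim_root_exists d.*2 ltac:(by rewrite double_gt0).
have wd := prim_root_half d0 pw.
have w1 : `|w| = 1 by apply/eqP; rewrite -(pexpr_eq1 d0) // -normrX wd normrN1.
apply/eqP => rt; have Re_w : 'Re (-1) = 'Re w.
  have := Re_le_Re_rootN1 d0 wd; rewrite rt => w_le.
  by apply/le_anti/andP; split => //; rewrite ReN1; case/andP: (Re_unit_bounds w1).
have {}rt : w = -1 by case: (unit_Re_eq (normrN1 _) w1 Re_w) => ->; rewrite ?rmorphN1.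
by move: (prim_order_dvd pw 2); rewrite rt sqrrN expr1n eqxx => /dvdn_leq; lia.
Qed.

Lemma rootN1_expr_neqN1 M N : (0 < M)%N -> (M %| N)%N -> (M < N)%N ->
  (N.-root (-1 : algC)) ^+ M != -1.
Proof.
move=> M0 MN MltN; set d := (N %/ M)%N.
have Nd : N = (M * d)%N by rewrite /d mulnC divnK.
have d_gt1 : (1 < d)%N by move: MltN; rewrite Nd; nia.
have [d0 N0] : (0 < d)%N /\ (0 < N)%N by lia.
set a := M.-root (-1 : algC); set w := d.-root (-1 : algC).
have aM : a ^+ M = -1 by rewrite rootCK.
have [v [v1 vM Re_av]] : exists v, [/\ `|v| = 1, v ^+ M = w & 'Re a <= 'Re v].
  apply: exists_root_Re_ge; rewrite ?norm_rootN1 // aM ReN1.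
  by case/andP: (Re_unit_bounds (norm_rootN1 d0)).
have vN : v ^+ N = -1 by rewrite Nd exprM vM rootCK.
apply/eqP => yM.
have Re_va : 'Re a = 'Re v.
  apply/le_anti/andP; split=> //.
  exact: le_trans (Re_le_Re_rootN1 N0 vN) (Re_le_Re_rootN1 M0 yM).
move/eqP: (rootN1_neqN1 d_gt1); apply; rewrite -/w -vM.
by case: (unit_Re_eq (norm_rootN1 M0) v1 Re_va) => ->; rewrite -?rmorphXn aM ?rmorphN1.
Qed.

Lemma prim_root_rootN1 N : (0 < N)%N -> (N.*2).-primitive_root (N.-root (-1 : algC)).
Proof.
move=> N0; apply: prim_root_double (rootCK N0 _) _ => // M M0 MN.
exact: rootN1_expr_neqN1.
Qed.

Lemma prim_root_zeta N : (0 < N)%N -> N.-primitive_root (zeta N).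
Proof.
move=> N0; have := exp_prim_root (prim_root_rootN1 N0) 2.
by rewrite -muln2 gcdnMl mulnK.
Qed.

Lemma prime_pexp_gt1 p e : prime p -> (0 < e)%N -> (1 < p ^ e)%N.
Proof. by move=> p_pr e0; apply: leq_ltn_trans e0 (ltn_expl e (prime_gt1 p_pr)). Qed.

Lemma ugcdn_eq n j k : (forall d, udvdn d n -> (d %| j) = (d %| k))%N ->
  ugcdn j n = ugcdn k n.
Proof.
move=> djk; apply: eq_bigl => d.
by case: (boolP (udvdn d n)) => [/djk->|_]; rewrite ?andbF.
Qed.

Lemma ugcdnDMr n k i : ugcdn (k + i * n) n = ugcdn k n.
Proof. by apply: ugcdn_eq => d /andP[dn _]; rewrite dvdn_addl // dvdn_mull. Qed.

Lemma ugcdnMl q n j : coprime q n -> ugcdn (q * j) n = ugcdn j n.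
Proof.
move=> qn; apply: ugcdn_eq => d /andP[dn _]; apply: Gauss_dvdr.
by apply: coprime_dvdl dn _; rewrite coprime_sym.
Qed.

Lemma ugcd0n n : ugcdn 0 n = ugcdn n n.
Proof. by apply: ugcdn_eq => d /andP[dn _]; rewrite dvdn0 dn. Qed.

Lemma ugcdn_eq1P n j : (0 < n)%N ->
  reflect (forall d, 1 < d -> d %| j -> ~~ udvdn d n)%N (ugcdn j n == 1%N).
Proof.
move=> n0; rewrite /ugcdn eqn_leq.
have -> : (1 <= \max_(d < n.+1 | (d %| j) && udvdn d n) d)%N.
  apply: (@leq_bigmax_cond _ _ _ (Ordinal (n0 : 1 < n.+1)%N)).
  by rewrite /= dvd1n /udvdn dvd1n coprime1n.
rewrite andbT; apply: (iffP (bigmax_leqP _ _ _)) => [le1 d d1 dj | nud d /andP[dj ud]].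
  apply/negP => ud; have dn : (d < n.+1)%N by rewrite ltnS dvdn_leq //; case/andP: ud.
  by have := le1 (Ordinal dn); rewrite /= dj ud leqNgt d1 => /(_ isT).
by rewrite leqNgt; apply/negP => d1; move: (nud d d1 dj); rewrite ud.
Qed.

Lemma ugcdn_eq1_pexpM p e m j : prime p -> (0 < e)%N -> coprime (p ^ e) m -> (0 < m)%N ->
  (ugcdn j (p ^ e * m) == 1%N) = ~~ (p ^ e %| j)%N && (ugcdn j m == 1%N).
Proof.
move=> p_pr e0 qm m0; set q := (p ^ e)%N.
have q1 : (1 < q)%N := prime_pexp_gt1 p_pr e0.
have qm0 : (0 < q * m)%N by rewrite muln_gt0 ltnW.
apply/(ugcdn_eq1P _ qm0)/andP => [good | [qNj /(ugcdn_eq1P _ m0) good] d d1 dj].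
  split.
    apply/negP => qj; move/negP: (good q q1 qj); apply.
    by rewrite /udvdn dvdn_mulr // mulKn // ltnW.
  apply/(ugcdn_eq1P _ m0) => d d1 dj; apply: contraNN (good d d1 dj) => /andP[dm dmd].
  rewrite /udvdn dvdn_mull //= -muln_divA // coprimeMr dmd andbT.
  by apply: coprime_dvdl dm _; rewrite coprime_sym.
apply/andP => -[dqm cd].
have [pd | pNd] := boolP (p %| d)%N.
  have qd : (q %| d)%N.
    have q_cop : coprime q (q * m %/ d) by rewrite /q coprimeXl // (coprime_dvdl pd cd).
    by rewrite -(Gauss_dvdl _ q_cop) mulnC divnK // dvdn_mulr.
  by rewrite (dvdn_trans qd dj) in qNj.
have dq : coprime d q by rewrite coprime_sym /q coprimeXl // prime_coprime.
have dm : (d %| m)%N by rewrite -(Gauss_dvdr _ dq).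
move: (good d d1 dj); rewrite /udvdn dm /=.
by move: cd; rewrite -muln_divA // coprimeMr => /andP[_ ->].
Qed.

Lemma ugcdn1 j : ugcdn j 1 = 1%N.
Proof.
apply/eqP/(ugcdn_eq1P _ (ltn0Sn 0)) => d d1 _; apply/negP => /andP[/dvdn_leq].
by move=> /(_ isT); rewrite leqNgt d1.
Qed.

Lemma ugcdn_eq1_pexp p e j : prime p -> (0 < e)%N ->
  (ugcdn j (p ^ e) == 1%N) = ~~ (p ^ e %| j)%N.
Proof.
move=> p_pr e0; have := ugcdn_eq1_pexpM j p_pr e0 (coprimen1 _) (ltn0Sn 0).
by rewrite muln1 ugcdn1 andbT.
Qed.

Lemma pexp_coprime_decomp p n : prime p -> (0 < n)%N -> (p %| n)%N ->
  exists e m, [/\ (0 < e)%N, coprime (p ^ e) m & n = (p ^ e * m)%N].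
Proof.
move=> p_pr n0 pn; have [m pm nE] := pfactor_coprime p_pr n0.
exists (logn p n), m; split; rewrite ?coprimeXl // 1?mulnC //.
by rewrite logn_gt0 mem_primes p_pr n0.
Qed.

Lemma pexp_coprime_ind (P : nat -> Prop) : P 1%N ->
    (forall p e m, prime p -> (0 < e)%N -> (0 < m)%N -> coprime (p ^ e) m ->
       P m -> P (p ^ e * m)%N) ->
  forall n, (0 < n)%N -> P n.
Proof.
move=> P1 Pstep; elim/ltn_ind => n IHn n0.
have [n_le1 | n_gt1] := leqP n 1; first by have -> : n = 1%N by lia.
have [p p_pr p_dvd] := pdivP n_gt1.
have [e [m [e0 qm nE]]] := pexp_coprime_decomp p_pr n0 p_dvd.
have m0 : (0 < m)%N by move: n0; rewrite nE muln_gt0 => /andP[].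
rewrite nE; apply: Pstep => //; apply: (IHn m) => //.
by rewrite nE (ltn_Pmull (prime_pexp_gt1 p_pr e0) m0).
Qed.

Section BigBlocks.
Variables (R : Type) (idx : R) (op : Monoid.law idx).

Lemma big_nat_blocks q m (F : nat -> R) :
  \big[op/idx]_(0 <= j < q * m) F j =
  \big[op/idx]_(0 <= i < q) \big[op/idx]_(0 <= k < m) F (k + i * m)%N.
Proof.
rewrite big_nat_mul; apply: eq_bigr => i _.
by rewrite -{1}[(i * m)%N]add0n big_addn mulSn addnK.
Qed.

Lemma big_nat_dvd q m (F : nat -> R) : (0 < q)%N ->
  \big[op/idx]_(0 <= j < q * m | (q %| j)%N) F j = \big[op/idx]_(0 <= k < m) F (q * k)%N.
Proof.
move=> q0; rewrite mulnC big_mkcond big_nat_blocks; apply: eq_bigr => i _.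
rewrite (big_ltn q0) add0n dvdn_mull // mulnC big1_seq ?Monoid.mulm1 // => k.
by rewrite mem_index_iota => /andP[_ /andP[k0 kq]]; rewrite dvdn_addl ?dvdn_mulr // gtnNdvd.
Qed.

End BigBlocks.

Section UnitaryCyclotomicProduct.
Variable F : fieldType.

(* Indexed by 0 <= j < n instead of 1 <= j <= n as in uPhi: for z^n = 1 the two
   agree (horner_uPhi), since the extreme terms coincide by ugcd0n. *)
Definition uphi (n : nat) (z x : F) : F :=
  \prod_(0 <= j < n | ugcdn j n == 1%N) (x - z ^+ j).

Lemma prod_subX_prim_root q m k (z x : F) : (q * m).-primitive_root z ->
  x ^+ q - (z ^+ q) ^+ k = \prod_(0 <= i < q) (x - z ^+ (k + i * m)).
Proof.
move=> pz; have pw : q.-primitive_root (z ^+ m) by apply: prim_root_exp_mull; rewrite mulnC.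
have z0 : z != 0 by rewrite (prim_root_eq0 pz) -lt0n (prim_order_gt0 pz).
set a := z ^+ k; have a0 : a != 0 by rewrite expf_neq0.
have := congr1 (horner^~ (x / a)) (factor_Xn_sub_1 pw).
rewrite /= horner_prod (eq_bigr _ (fun i _ => hornerXsubC _ _)) !hornerE => prod_xa.
rewrite -exprAC -/a (eq_bigr (fun i => a * (x / a - (z ^+ m) ^+ i))); last first.
  by move=> i _; rewrite mulrBr mulrCA divff // mulr1 -exprM -exprD mulnC.
rewrite big_split /= prodr_const_nat subn0 prod_xa.
by rewrite mulrBr mulr1 -exprMn mulrCA divff // mulr1.
Qed.

Lemma uphi_pexp_mul p e m (z x : F) : prime p -> (0 < e)%N -> coprime (p ^ e) m ->
    (p ^ e * m).-primitive_root z ->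
  uphi (p ^ e * m) z x * uphi m (z ^+ (p ^ e)) x = uphi m (z ^+ (p ^ e)) (x ^+ (p ^ e)).
Proof.
move=> p_pr e0 qm pz; set q := (p ^ e)%N.
have q0 : (0 < q)%N by rewrite expn_gt0 prime_gt0.
have m0 : (0 < m)%N := prim_order_gt0 (prim_root_exp_mull pz).
pose g j := if ugcdn j m == 1%N then x - z ^+ j else 1.
have -> : uphi m (z ^+ q) (x ^+ q) = \prod_(0 <= j < q * m) g j.
  rewrite big_nat_blocks exchange_big_nat /uphi big_mkcond; apply: eq_bigr => k _.
  under eq_bigr do rewrite /g ugcdnDMr.
  by case: ifP => _; [rewrite (prod_subX_prim_root _ _ pz) | rewrite big1].
rewrite (bigID (fun j => q %| j)%N) /= mulrC; congr (_ * _).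
  rewrite big_nat_dvd // /uphi [LHS]big_mkcond; apply: eq_bigr => j _.
  by rewrite /g ugcdnMl // exprM.
rewrite /uphi /g -big_mkcondr; apply: eq_bigl => j.
by rewrite (ugcdn_eq1_pexpM _ p_pr e0 qm m0) andbC.
Qed.

Lemma uphi_pexp_mul_eq1 p e m (z x : F) : prime p -> (0 < e)%N -> coprime (p ^ e) m ->
    (p ^ e * m).-primitive_root z -> x ^+ (p ^ e) = x ->
  uphi m (z ^+ (p ^ e)) x != 0 -> uphi (p ^ e * m) z x = 1.
Proof.
move=> p_pr e0 qm pz xq nz; have := uphi_pexp_mul x p_pr e0 qm pz.
by rewrite xq -[RHS in _ = RHS]mul1r => /(mulIf nz).
Qed.

Lemma uphi1 (z x : F) : uphi 1 z x = x - 1.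
Proof. by rewrite /uphi big_mkcond big_nat1 ugcdn1 expr0. Qed.

Lemma uphi_pexp_at1 p e (z : F) : prime p -> (0 < e)%N -> (p ^ e).-primitive_root z ->
  uphi (p ^ e) z 1 = (p ^ e)%:R.
Proof.
move=> p_pr e0 pz; set q := (p ^ e)%N; have q0 : (0 < q)%N := prim_order_gt0 pz.
have uphiE : uphi q z 1 = (\prod_(1 <= j < q) ('X - (z ^+ j)%:P)).[1].
  rewrite /uphi big_mkcond (big_ltn q0) ugcdn_eq1_pexp // dvdn0 /= mul1r horner_prod.
  apply: eq_big_nat => j /andP[j1 jq].
  by rewrite ugcdn_eq1_pexp // gtnNdvd // hornerXsubC.
have XsubC1_neq0 : ('X - 1 : {poly F}) != 0 by rewrite -polyC1 polyXsubC_eq0.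
rewrite uphiE (_ : \prod_(1 <= j < q) _ = \sum_(i < q) 'X^i); last first.
  apply: (mulfI XsubC1_neq0); rewrite -subrX1 -(factor_Xn_sub_1 pz) (big_ltn q0).
  by rewrite expr0 polyC1.
rewrite horner_sum (eq_bigr (fun _ => 1)) => [|i _]; last by rewrite hornerXn expr1n.
by rewrite sumr_const card_ord.
Qed.

Lemma uphi_odd_N1 m (z : F) : 2%:R != 0 :> F -> odd m -> m.-primitive_root z ->
  uphi m z (-1) = if m == 1%N then -2 else 1.
Proof.
move=> two_neq0 m_odd pz; have m0 := prim_order_gt0 pz.
move: m m0 z pz m_odd; apply: pexp_coprime_ind => [z _ _ | p e m p_pr e0 m0 qm IHm z pz].
  by rewrite uphi1 -opprD.
rewrite oddM => /andP[q_odd m_odd]; rewrite muln_eq1 gtn_eqF ?prime_pexp_gt1 //=.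
apply: uphi_pexp_mul_eq1 => //; first by rewrite -signr_odd q_odd.
by rewrite (IHm _ (prim_root_exp_mull pz) m_odd); case: ifP; rewrite ?oppr_eq0 ?oner_neq0.
Qed.

Lemma uphi_at1_neq0 m (z : F) : (1 < m)%N -> m.-primitive_root z -> uphi m z 1 != 0.
Proof.
move=> m_gt1 pz; have m0 := prim_order_gt0 pz.
move: m m0 z pz m_gt1; apply: pexp_coprime_ind => // p e m p_pr e0 m0 qm IHm z pz _.
have [m_le1 | m_gt1] := leqP m 1.
  have m_eq1 : m = 1%N by lia.
  rewrite m_eq1 muln1 in pz *; rewrite uphi_pexp_at1 //; exact: prim_root_natf_neq0 pz.
rewrite uphi_pexp_mul_eq1 ?expr1n ?oner_neq0 //.
exact: IHm _ (prim_root_exp_mull pz) m_gt1.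
Qed.

Lemma uphi_at1_eq1 m (z : F) : (1 < m)%N -> (forall p b, prime p -> m <> (p ^ b)%N) ->
  m.-primitive_root z -> uphi m z 1 = 1.
Proof.
move=> m_gt1 not_pexp pz.
have [p p_pr p_dvd] := pdivP m_gt1.
have [e [m' [e0 qm' mE]]] := pexp_coprime_decomp p_pr (ltnW m_gt1) p_dvd.
have m'_gt1 : (1 < m')%N.
  have m'_neq1 : m' != 1%N by apply/eqP => m'1; apply: (not_pexp _ e p_pr); rewrite mE m'1 muln1.
  by move: m_gt1 m'_neq1; rewrite mE; nia.
rewrite mE in pz *; apply: uphi_pexp_mul_eq1; rewrite ?expr1n //.
exact: uphi_at1_neq0 m'_gt1 (prim_root_exp_mull pz).
Qed.

Lemma uphi_2exp_mul_N1 a m (z : F) : (0 < a)%N -> odd m -> (2 ^ a * m).-primitive_root z ->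
  uphi (2 ^ a * m) z (-1) * uphi m (z ^+ (2 ^ a)) (-1) = uphi m (z ^+ (2 ^ a)) 1.
Proof.
move=> a0 m_odd pz; rewrite uphi_pexp_mul ?coprimeXl ?coprime2n //.
by rewrite -signr_odd oddX orbF eqn0Ngt a0.
Qed.

End UnitaryCyclotomicProduct.

Lemma horner_uPhi n x : (0 < n)%N -> (uPhi n).[x] = uphi n (zeta n) x.
Proof.
move=> n0; rewrite /uPhi /uphi horner_prod (eq_bigr _ (fun j _ => hornerXsubC _ _)).
rewrite big_mkcond [RHS]big_mkcond big_nat_recr //= (big_ltn n0) mulrC ugcd0n expr0.
by rewrite (prim_expr_order (prim_root_zeta n0)).
Qed.

Theorem lemma4p3 (n : nat) (hn : (0 < n)%N) :
  [/\ (n = 1%N -> (uPhi n).[-1] = -2),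
      (forall a : nat, (1 <= a)%N -> n = (2 ^ a)%N -> (uPhi n).[-1] = 0),
      (forall a p b : nat, prime p -> odd p -> (1 <= a)%N -> (1 <= b)%N ->
          n = (2 ^ a * p ^ b)%N -> (uPhi n).[-1] = (p ^ b)%:R)
    & (n <> 1%N ->
       (forall a : nat, (1 <= a)%N -> n <> (2 ^ a)%N) ->
       (forall a p b : nat, prime p -> odd p -> (1 <= a)%N -> (1 <= b)%N ->
          n <> (2 ^ a * p ^ b)%N) ->
       (uPhi n).[-1] = 1)].
Proof.
have pz := prim_root_zeta hn; rewrite horner_uPhi //; move: (zeta n) pz => z pz.
have two_neq0 : 2%:R != 0 :> algC by rewrite pnatr_eq0.
split.
- by move=> ->; rewrite uphi1 -opprD.
- move=> a a0 nE; rewrite nE -[(2 ^ a)%N]muln1 in pz *.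
  have := uphi_2exp_mul_N1 a0 (isT : odd 1) pz; rewrite !uphi1 subrr -opprD.
  by move/eqP; rewrite mulf_eq0 oppr_eq0 (negPf two_neq0) orbF => /eqP.
- move=> a p b p_pr p_odd a0 b0 nE; rewrite nE in pz *.
  have pb_odd : odd (p ^ b) by rewrite oddX p_odd orbT.
  have pw := prim_root_exp_mull pz; have := uphi_2exp_mul_N1 a0 pb_odd pz.
  by rewrite uphi_pexp_at1 // (uphi_odd_N1 two_neq0 pb_odd pw) gtn_eqF ?prime_pexp_gt1 // mulr1.
move=> n_neq1 not_2exp not_2pexp.
have [n_odd | n_even] := boolP (odd n).
  by rewrite uphi_odd_N1 // (negPf (introN eqP n_neq1)).
have two_dvd : (2 %| n)%N by rewrite dvdn2.
have [a [m [a0 cop nE]]] := pexp_coprime_decomp (isT : prime 2) hn two_dvd.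
have m_odd : odd m by rewrite -coprime2n -(coprime_pexpl _ _ a0).
have m_neq1 : m != 1%N by apply/eqP => m1; apply: (not_2exp a a0); rewrite nE m1 muln1.
have m_gt1 : (1 < m)%N by move: hn m_neq1; rewrite nE muln_gt0 => /andP[_]; lia.
have not_pexp p b : prime p -> m <> (p ^ b)%N.
  move=> p_pr mE; have b0 : (0 < b)%N by move: m_neq1; rewrite mE lt0n; apply: contraNneq => ->.
  have p_odd : odd p by move: m_odd; rewrite mE oddX eqn0Ngt b0.
  by apply: (not_2pexp a p b p_pr p_odd a0 b0); rewrite nE mE.
rewrite nE in pz *; have pw := prim_root_exp_mull pz; have := uphi_2exp_mul_N1 a0 m_odd pz.
by rewrite (uphi_at1_eq1 m_gt1 not_pexp pw) (uphi_odd_N1 two_neq0 m_odd pw) gtn_eqF // mulr1.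
Qed.
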